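(* Let $\varrho,\sigma$ be density operators on a finite-dimensional Hilbert space $\mathcal H$ and $\alpha\in(0,1)$. Then \[ \limsup_{n\to\infty}\frac1nD_\alpha^{\mathrm{test}}(\varrho^{\otimes n}\|\sigma^{\otimes n})=\limsup_{n\to\infty}-\frac1n\log\min_{0\le T\le I}\Big\{\big(\operatorname{Tr}\varrho^{\otimes n}(I-T)\big)^{\frac{\alpha}{1-\alpha}}+\operatorname{Tr}\sigma^{\otimes n}T\Big\}, \] and the same equality holds with $\liminf$ in place of $\limsup$ on both sides (the minima being over operators $T$ on $\mathcal H^{\otimes n}$ with $0\le T\le I$). In particular, the limit on the left exists if and only if the limit on the right exists, in which case they are equal.
   Context: For probability vectors $p,q$ and $\alpha\in(0,1)$, $D_\alpha(p\|q)=\frac{1}{\alpha-1}\log\sum_x p(x)^\alpha q(x)^{1-\alpha}$. A test is an operator $0\le T\le I$; $\mathcal T(X):=(\operatorname{Tr}XT,\operatorname{Tr}X(I-T))$; $D_\alpha^{\mathrm{test}}(\varrho\|\sigma):=\max_{0\le T\le I}D_\alpha(\mathcal T(\varrho)\|\mathcal T(\sigma))$. *)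

From HB Require Import structures.
From mathcomp Require Import all_boot all_order all_algebra.
From mathcomp Require Import complex mxtens.
From mathcomp Require Import all_classical all_reals all_analysis.
Set Implicit Arguments. Unset Strict Implicit. Unset Printing Implicit Defensive.
Import Order.TTheory GRing.Theory Num.Theory.
Local Open Scope ring_scope.
Local Open Scope complex_scope.

Section QDefs.
Variable R : realType.
Local Notation C := R[i].

Definition adjmx {m n} (A : 'M[C]_(m, n)) : 'M[C]_(n, m) :=
  \matrix_(i, j) (A j i)^*.

(* positive semidefinite: <v, A v> >= 0 for all v (in the order of C,
   which forces the value to be real) *)
Definition psd {d} (A : 'M[C]_d) : Prop :=
  forall v : 'cV[C]_d, 0 <= (adjmx v *m A *m v) 0 0.

Definition density {d} (rho : 'M[C]_d) : Prop := psd rho /\ \tr rho = 1.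

Definition is_test {d} (T : 'M[C]_d) : Prop := psd T /\ psd (1%:M - T).

Definition trR {d} (A : 'M[C]_d) : R := complex.Re (\tr A).

Definition elog (x : R) : \bar R := if 0 < x then (ln x)%:E else -oo%E.

(* Renyi divergence of two probability vectors on a two-point set,
   D_alpha(p||q) = 1/(alpha-1) log sum_x p(x)^alpha q(x)^(1-alpha),
   with value +oo when the sum vanishes. *)
Definition renyi2 (alpha p1 p2 q1 q2 : R) : \bar R :=
  (((alpha - 1)^-1)%:E *
   elog (p1 `^ alpha * q1 `^ (1 - alpha) + p2 `^ alpha * q2 `^ (1 - alpha)))%E.

(* D_alpha( T(rho) || T(sigma) ) for the binary measurement of a test T *)
Definition renyi_T (alpha : R) {d} (rho sigma T : 'M[C]_d) : \bar R :=
  renyi2 alpha (trR (rho *m T)) (trR (rho *m (1%:M - T)))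
               (trR (sigma *m T)) (trR (sigma *m (1%:M - T))).

(* measured (test) Renyi divergence: max over tests (the max is attained,
   so it equals the supremum) *)
Definition Dtest (alpha : R) {d} (rho sigma : 'M[C]_d) : \bar R :=
  ereal_sup [set renyi_T alpha rho sigma T | T in [set T | is_test T]].

(* min over tests of (Tr rho (I-T))^(alpha/(1-alpha)) + Tr sigma T
   (attained, hence equal to the infimum) *)
Definition errmin (alpha : R) {d} (rho sigma : 'M[C]_d) : R :=
  inf [set (trR (rho *m (1%:M - T))) `^ (alpha / (1 - alpha))
            + trR (sigma *m T) | T in [set T | is_test T]].

Definition tpow {d} (A : 'M[C]_d) (n : nat) : 'M[C]_(d ^ n) := ntensmx A n.

Definition lhs_seq (alpha : R) {d} (rho sigma : 'M[C]_d) (n : nat) : \bar R :=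
  ((n%:R^-1)%:E * Dtest alpha (tpow rho n) (tpow sigma n))%E.

Definition rhs_seq (alpha : R) {d} (rho sigma : 'M[C]_d) (n : nat) : \bar R :=
  (- ((n%:R^-1)%:E * elog (errmin alpha (tpow rho n) (tpow sigma n))))%E.

End QDefs.

(* For a test T put p = Tr rho (I - T) and q = Tr sigma T.  The Renyi sum of
   the two binary distributions, Q = (1 - p)^a q^(1-a) + p^a (1 - q)^(1-a),
   is comparable to (p^(a/(1-a)) + q)^(1-a): it is at most twice this, and at
   least an eighth of it when q <= 1/2, which can always be arranged since
   replacing T by I - T leaves Q unchanged.  Taking -log(.)/(1-a) and
   optimising over T, D_test(rho || sigma) and -log min_T (p^(a/(1-a)) + q)
   differ by a constant depending on a only, not on the dimension.  Applied to
   the tensor powers this gives a gap O(1/n) between the two sequences. *)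

From HB Require Import structures.
From mathcomp Require Import all_boot all_order all_algebra.
From mathcomp Require Import complex mxtens.
From mathcomp Require Import all_classical all_reals all_analysis.
From mathcomp Require Import ring lra.
Import Order.TTheory GRing.Theory Num.Theory.
Set Implicit Arguments.
Unset Strict Implicit.
Unset Printing Implicit Defensive.
Local Open Scope ring_scope.

Section PowerBounds.
Variable R : realType.
Implicit Types x y e : R.

Lemma ler_powRl x y e : 0 <= e -> 0 <= x -> x <= y -> x `^ e <= y `^ e.
Proof. by move=> e0 x0 xy; apply: ge0_ler_powR; rewrite ?nnegrE // (le_trans x0). Qed.

Lemma powR_le1 x e : 0 <= x <= 1 -> 0 <= e -> x `^ e <= 1.
Proof. by move=> /andP[x0 x1] e0; have := ler_powRl e0 x0 x1; rewrite powR1. Qed.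

Lemma powRD_le x y e : 0 <= e <= 1 -> 0 <= x -> 0 <= y ->
  (x + y) `^ e <= 2 * (x `^ e + y `^ e).
Proof.
move=> /andP[e0 e1]; wlog xy : x y / x <= y => [hwlog x0 y0|x0 y0].
  by case: (leP x y) => [|/ltW] xy; [|rewrite addrC [_ + y `^ e]addrC]; apply: hwlog.
have h2e : 2 `^ e <= 2 :> R by apply: ler1_powR; lra.
have : (x + y) `^ e <= 2 `^ e * y `^ e.
  by rewrite -powRM //; apply: ler_powRl; lra.
by have := powR_ge0 x e; have := powR_ge0 y e; nra.
Qed.

Section BinaryAffinity.
Variable alpha : R.
Hypothesis alpha01 : 0 < alpha < 1.
Local Notation k := (alpha / (1 - alpha)).

Definition affinity2 p q :=
  (1 - p) `^ alpha * q `^ (1 - alpha) + p `^ alpha * (1 - q) `^ (1 - alpha).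

Lemma affinity2_flip p q : affinity2 (1 - p) (1 - q) = affinity2 p q.
Proof. by rewrite /affinity2 !subKr addrC. Qed.

Lemma powR_alphaE x : x `^ alpha = (x `^ k) `^ (1 - alpha).
Proof.
by case/andP: alpha01 => a0 a1; rewrite -powRrM mulfVK // subr_eq0 gt_eqF.
Qed.

Lemma affinity2_le p q : 0 <= p <= 1 -> 0 <= q <= 1 ->
  affinity2 p q <= 2 * (p `^ k + q) `^ (1 - alpha).
Proof.
case/andP: alpha01 => a0 a1 /andP[p0 p1] /andP[q0 q1].
have b0 : 0 <= 1 - alpha by lra.
have u1 : (1 - p) `^ alpha <= 1 by apply: powR_le1; [apply/andP|]; lra.
have u2 : (1 - q) `^ (1 - alpha) <= 1 by apply: powR_le1; [apply/andP|]; lra.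
have pk0 := powR_ge0 p k.
have e1 : q `^ (1 - alpha) <= (p `^ k + q) `^ (1 - alpha) by apply: ler_powRl; lra.
have e2 : p `^ alpha <= (p `^ k + q) `^ (1 - alpha).
  by rewrite powR_alphaE; apply: ler_powRl; lra.
have := powR_ge0 q (1 - alpha); have := powR_ge0 p alpha.
have := powR_ge0 (1 - p) alpha; have := powR_ge0 (1 - q) (1 - alpha).
rewrite /affinity2; nra.
Qed.

(* If p <= 1/2 both factors (1 - p)^alpha and (1 - q)^(1 - alpha) are at
   least 1/2; otherwise p^alpha (1 - q)^(1 - alpha) alone is at least 1/4. *)
Lemma affinity2_ge p q : 0 <= p <= 1 -> 0 <= q <= 2^-1 ->
  (p `^ k + q) `^ (1 - alpha) / 8 <= affinity2 p q.
Proof.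
case/andP: alpha01 => a0 a1 /andP[p0 p1] /andP[q0 q1].
have b01 : 0 <= 1 - alpha <= 1 by apply/andP; lra.
have pk0 := powR_ge0 p k.
have pk1 : p `^ k <= 1 by apply: powR_le1; [apply/andP | apply: divr_ge0]; lra.
have half_le x e : 2^-1 <= x -> 0 <= e <= 1 -> 2^-1 <= x `^ e.
  move=> hx /andP[e0 e1]; apply: le_trans (ler_powRl e0 _ hx); last by lra.
  by apply: ger1_powR => //; apply/andP; lra.
have hq : 2^-1 <= (1 - q) `^ (1 - alpha) by apply: half_le => //; lra.
have := powR_ge0 (1 - p) alpha; have := powR_ge0 q (1 - alpha).
have := powR_ge0 p alpha; have := powR_ge0 (1 - q) (1 - alpha).
rewrite /affinity2; case: (leP p 2^-1) => hp.
- have hp' : 2^-1 <= (1 - p) `^ alpha by apply: half_le => //; lra.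
  by have := powRD_le b01 pk0 q0; rewrite -powR_alphaE; nra.
- have hp' : 2^-1 <= p `^ alpha by apply: half_le => //; lra.
  have : (p `^ k + q) `^ (1 - alpha) <= 2 `^ (1 - alpha).
    by apply: ler_powRl; lra.
  have : 2 `^ (1 - alpha) <= 2 :> R by apply: ler1_powR; lra.
  nra.
Qed.

End BinaryAffinity.
End PowerBounds.

Section BinaryTests.
Variables (R : realType) (alpha : R).
Hypothesis alpha01 : 0 < alpha < 1.
Local Notation k := (alpha / (1 - alpha)).
Local Open Scope classical_set_scope.

(* A test x enters only through its two error probabilities, p x and q x,
   standing for Tr rho (I - T) and Tr sigma T. *)
Variables (X : Type) (tests : set X) (p q : X -> R).

Definition renyi_test x := renyi2 alpha (1 - p x) (p x) (q x) (1 - q x).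
Definition renyi_sup := ereal_sup [set renyi_test x | x in tests].
Definition err_inf := inf [set p x `^ k + q x | x in tests].

Lemma renyi_testE x :
  renyi_test x = (((alpha - 1)^-1)%:E * elog (affinity2 alpha (p x) (q x)))%E.
Proof. by []. Qed.

Lemma renyi_test_gt0 x : 0 < affinity2 alpha (p x) (q x) ->
  renyi_test x = (- (ln (affinity2 alpha (p x) (q x)) / (1 - alpha)))%:E.
Proof.
move=> Q0; rewrite renyi_testE /elog Q0 -EFinM mulrC; congr _%:E.
by rewrite -opprB invrN mulrN.
Qed.

Lemma renyi_test_le0 x : affinity2 alpha (p x) (q x) <= 0 -> renyi_test x = +oo%E.
Proof.
case/andP: alpha01 => a0 a1 Q0.
rewrite renyi_testE /elog ltNge Q0 /=.
by apply: lt0_muleNy; rewrite lte_fin invr_lt0; lra.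
Qed.

Hypothesis err01 : forall x, tests x -> 0 <= p x <= 1 /\ 0 <= q x <= 1.
Variable x0 : X.
Hypothesis tests_x0 : tests x0.

Lemma err_inf_lbound : lbound [set p x `^ k + q x | x in tests] 0.
Proof.
move=> _ [x /err01[_ /andP[q0 _]] <-].
by apply: addr_ge0 => //; exact: powR_ge0.
Qed.

Lemma err_has_inf : has_inf [set p x `^ k + q x | x in tests].
Proof. by split; [exists (p x0 `^ k + q x0); exists x0 | exists 0; exact: err_inf_lbound]. Qed.

Lemma err_inf_ge0 : 0 <= err_inf.
Proof. by apply: lb_le_inf; [exists (p x0 `^ k + q x0); exists x0 | exact: err_inf_lbound]. Qed.

Lemma err_inf_le x : tests x -> err_inf <= p x `^ k + q x.
Proof. by move=> tx; apply: (ge_inf (proj2 err_has_inf)); exists x. Qed.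

Lemma renyi_sup_ge_ln y : 0 < y -> err_inf < y ->
  ((- (ln 2 / (1 - alpha)) - ln y)%:E <= renyi_sup)%E.
Proof.
case/andP: alpha01 => a0 a1 y0 my.
have e0 : 0 < y - err_inf by lra.
have [_ [x tx <-]] := inf_adherent e0 err_has_inf; rewrite subrKC => xy.
have [/andP[p0 p1] /andP[q0 q1]] := err01 tx.
apply: le_ereal_sup_tmp; exists (renyi_test x); first by exists x.
case: (leP (affinity2 alpha (p x) (q x)) 0) => [Q0|Q0].
  by rewrite renyi_test_le0 ?leey.
rewrite renyi_test_gt0 // lee_fin.
have Qle : affinity2 alpha (p x) (q x) <= 2 * y `^ (1 - alpha).
  apply: le_trans (affinity2_le alpha01 _ _) _; try by apply/andP.
  rewrite ler_pM2l //; apply: ler_powRl; try lra.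
  by apply: addr_ge0 => //; exact: powR_ge0.
have := Qle; rewrite -ler_ln ?posrE //; last by rewrite mulr_gt0 ?powR_gt0.
rewrite lnM ?posrE ?powR_gt0 // ln_powR => lnQ.
have -> : - (ln 2 / (1 - alpha)) - ln y = - ((ln 2 + (1 - alpha) * ln y) / (1 - alpha)).
  by field; lra.
by rewrite lerN2 ler_pM2r ?invr_gt0 //; lra.
Qed.

Lemma renyi_sup_ge_elog :
  (- elog err_inf <= renyi_sup + (ln 2 / (1 - alpha) + ln 2)%:E)%E.
Proof.
case/andP: alpha01 => a0 a1.
have [m0|m_gt0] := eqVneq err_inf 0; last first.
  have m0 : 0 < err_inf by rewrite lt_neqAle eq_sym m_gt0 err_inf_ge0.
  have := @renyi_sup_ge_ln (2 * err_inf) (ltac:(lra)) (ltac:(lra)).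
  rewrite /elog m0 lnM ?posrE //.
  by case: renyi_sup => [r||] //; rewrite ?leey // !lee_fin; lra.
suff -> : renyi_sup = +oo%E by rewrite leey.
apply: eq_infty => r.
have := @renyi_sup_ge_ln (expR (- (r + ln 2 / (1 - alpha)))).
rewrite expR_gt0 m0 expR_gt0 expRK => /(_ isT isT); apply: le_trans.
by rewrite lee_fin; lra.
Qed.

Variable flip : X -> X.
Hypothesis flipP : forall x, tests x ->
  [/\ tests (flip x), p (flip x) = 1 - p x & q (flip x) = 1 - q x].

Lemma affinity2_ge_err_inf x : tests x ->
  err_inf `^ (1 - alpha) / 8 <= affinity2 alpha (p x) (q x).
Proof.
case/andP: alpha01 => a0 a1.
suff flip_free y : tests y -> q y <= 2^-1 ->
    err_inf `^ (1 - alpha) / 8 <= affinity2 alpha (p y) (q y).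
  move=> tx; case: (leP (q x) 2^-1) => [|qx]; first exact: flip_free.
  have [tfx pfx qfx] := flipP tx.
  by rewrite -affinity2_flip -pfx -qfx; apply: flip_free => //; lra.
move=> ty qy; have [p01 /andP[q0 _]] := err01 ty.
apply: le_trans (affinity2_ge alpha01 p01 _); last by apply/andP.
rewrite ler_pM2r; last by lra.
apply: ler_powRl; [lra | exact: err_inf_ge0 | exact: err_inf_le].
Qed.

Lemma renyi_sup_le_elog : (renyi_sup <= - elog err_inf + (ln 8 / (1 - alpha))%:E)%E.
Proof.
case/andP: alpha01 => a0 a1.
have [m0|m_gt0] := eqVneq err_inf 0; first by rewrite m0 /elog ltxx /= leey.
have m0 : 0 < err_inf by rewrite lt_neqAle eq_sym m_gt0 err_inf_ge0.
apply/ereal_supP => _ [x tx <-].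
have mQ := affinity2_ge_err_inf tx.
have m8 : 0 < err_inf `^ (1 - alpha) / 8 by rewrite divr_gt0 ?powR_gt0.
rewrite renyi_test_gt0; last by lra.
rewrite /elog m0 -EFinN -EFinD lee_fin.
have := mQ; rewrite -ler_ln ?posrE //; last by lra.
rewrite lnM ?posrE ?invr_gt0 ?powR_gt0 // lnV ?posrE // ln_powR => lnQ.
have -> : - ln err_inf + ln 8 / (1 - alpha)
    = - (((1 - alpha) * ln err_inf - ln 8) / (1 - alpha)) by field; lra.
by rewrite lerN2 ler_pM2r ?invr_gt0 //; lra.
Qed.

End BinaryTests.

Section LimnSupInf.
Variable R : realType.
Local Open Scope classical_set_scope.
Local Open Scope ereal_scope.
Implicit Types u v : (\bar R)^nat.

Lemma lee_wpmul2l_addr (r c : R) (x y : \bar R) : (0 <= r)%R ->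
  x <= y + c%:E -> r%:E * x <= r%:E * y + (c * r)%:E.
Proof.
move=> r0 xy; apply: le_trans (lee_wpmul2l _ xy) _; first by rewrite lee_fin.
by rewrite muleDr ?fin_num_adde_defl // -EFinM mulrC.
Qed.

Lemma le_limn_esup u v : (\forall n \near \oo, u n <= v n) ->
  limn_esup u <= limn_esup v.
Proof.
move=> [N _ uv]; rewrite !limn_esup_lim.
apply: lee_lim; [exact: is_cvg_esups | exact: is_cvg_esups |].
exists N => // n /= Nn; apply/ereal_supP => _ [m /= nm <-].
by apply: le_trans (uv m (leq_trans Nn nm)) (ereal_sup_ubound _); exists m.
Qed.

Lemma le_limn_einf u v : (\forall n \near \oo, u n <= v n) ->
  limn_einf u <= limn_einf v.
Proof.
move=> uv; rewrite -[limn_einf u]oppeK -[limn_einf v]oppeK -!limn_esupN leeN2.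
by apply: le_limn_esup; apply: filterS uv => n /=; rewrite leeN2.
Qed.

Lemma limn_esup_shift u (e : R) :
  limn_esup (fun n => u n + e%:E) = limn_esup u + e%:E.
Proof.
rewrite -[LHS]oppeK -limn_einfN.
have -> : -%E \o (fun n => u n + e%:E) = (fun n => (- e)%:E + (-%E \o u) n).
  by apply/funext => n /=; rewrite fin_num_oppeD // addeC.
rewrite (limn_einf_shift (-%E \o u)) // limn_einfN.
by rewrite oppeB ?fin_num_adde_defr // EFinN !oppeK addeC.
Qed.

Lemma eventually_div_le (c e : R) : (0 < e)%R ->
  \forall n \near \oo, (0 < n)%N /\ (c / n%:R <= e)%R.
Proof.
move=> e0; exists (Num.truncn (c / e)).+1 => // n /= cen; split.
  exact: leq_trans cen.
have n0 : (0 < n%:R :> R)%R by rewrite ltr0n (leq_trans _ cen).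
rewrite ler_pdivrMr // mulrC -ler_pdivrMr //; apply/ltW/(lt_le_trans (truncnS_gt _)).
by rewrite ler_nat.
Qed.

Lemma limn_esup_le_addn u v (c : R) :
  (forall n, (0 < n)%N -> u n <= v n + (c / n%:R)%:E) ->
  limn_esup u <= limn_esup v.
Proof.
move=> uv; apply/lee_addgt0Pr => e e0; rewrite -limn_esup_shift.
apply: le_limn_esup; apply: filterS (eventually_div_le c e0) => n [n0 cn].
by apply: le_trans (uv n n0) _; apply: leeD; rewrite ?lee_fin.
Qed.

Lemma limn_einf_le_addn u v (c : R) :
  (forall n, (0 < n)%N -> u n <= v n + (c / n%:R)%:E) ->
  limn_einf u <= limn_einf v.
Proof.
move=> uv; apply/lee_addgt0Pr => e e0.
rewrite addeC -limn_einf_shift //.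
apply: le_limn_einf; apply: filterS (eventually_div_le c e0) => n [n0 cn].
by rewrite addeC; apply: le_trans (uv n n0) _; apply: leeD; rewrite ?lee_fin.
Qed.

End LimnSupInf.

Section Gramian.
Variable R : realType.
Local Notation C := R[i].
Local Open Scope sesquilinear_scope.

Lemma adjmxE m n (A : 'M[C]_(m, n)) : adjmx A = A ^t*.
Proof. by apply/matrixP => i j; rewrite !mxE. Qed.

Lemma trmxC_mul m n p (A : 'M[C]_(m, n)) (B : 'M[C]_(n, p)) :
  (A *m B) ^t* = B ^t* *m A ^t*.
Proof. by rewrite trmx_mul map_mxM. Qed.

Definition gramian n (A : 'M[C]_n) := exists B : 'M[C]_n, A = B *m B ^t*.

Lemma gramian_tens m n (A : 'M[C]_m) (B : 'M[C]_n) :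
  gramian A -> gramian B -> gramian (A *t B).
Proof.
by move=> [X ->] [Y ->]; exists (X *t Y); rewrite trmx_tens map_mxT tensmx_mul.
Qed.

Lemma gramian_ntens n (A : 'M[C]_n) k : gramian A -> gramian (ntensmx A k).
Proof.
move=> gA; case: k => [|k]; first by exists 1%:M; rewrite ntensmx0 trmx1 map_mx1 mulmx1.
by elim: k => [|k IHk]; rewrite ?ntensmx1 // ntensmxSS; apply: gramian_tens.
Qed.

Lemma mxtrace_tens m n (A : 'M[C]_m) (B : 'M[C]_n) : \tr (A *t B) = \tr A * \tr B.
Proof. by rewrite /mxtrace mulr_sum; apply: eq_bigr => i _; rewrite mxE. Qed.

Lemma mxtrace_ntens n (A : 'M[C]_n) k : \tr (ntensmx A k) = \tr A ^+ k.
Proof.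
case: k => [|k]; first by rewrite ntensmx0 mxtrace1 expr0.
elim: k => [|k IHk]; first by rewrite ntensmx1 expr1.
by rewrite ntensmxSS mxtrace_tens IHk -exprS.
Qed.

Lemma gramian_trR_mul_ge0 n (A T : 'M[C]_n) : gramian A -> psd T ->
  0 <= trR (A *m T).
Proof.
move=> [B ->] psdT; rewrite /trR -mulmxA mxtrace_mulC.
suff : 0 <= \tr (B ^t* *m T *m B) by rewrite lecE => /andP[].
apply: sumr_ge0 => i _.
suff -> : (B ^t* *m T *m B) i i = (adjmx (col i B) *m T *m col i B) 0 0 by exact: psdT.
rewrite adjmxE !mxE; apply: eq_bigr => k _; rewrite !mxE.
by congr (_ * _); apply: eq_bigr => l _; rewrite !mxE.
Qed.

End Gramian.

Section PsdGramian.
Variable R : realType.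
Local Notation C := R[i].
Local Open Scope sesquilinear_scope.
Variable n : nat.
Implicit Types (A : 'M[C]_n) (u w : 'cV[C]_n).

Let sesq A u w := (u ^t* *m A *m w) 0 0.

Let sesqDl A u u' w : sesq A (u + u') w = sesq A u w + sesq A u' w.
Proof. by rewrite /sesq linearD map_mxD !mulmxDl mxE. Qed.

Let sesqDr A u w w' : sesq A u (w + w') = sesq A u w + sesq A u w'.
Proof. by rewrite /sesq !mulmxDr mxE. Qed.

Let sesqZl A c u w : sesq A (c *: u) w = c^* * sesq A u w.
Proof. by rewrite /sesq linearZ /= map_mxZ -!scalemxAl mxE. Qed.

Let sesqZr A c u w : sesq A u (c *: w) = c * sesq A u w.
Proof. by rewrite /sesq -!scalemxAr mxE. Qed.

Let sesq_delta A i j : sesq A (delta_mx i 0) (delta_mx j 0) = A i j.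
Proof. by rewrite /sesq trmx_delta map_delta_mx -rowE -colE !mxE. Qed.

(* a, b, a + x + y + b and a + i x - i y + b are the values of v^* A v at
   v = e_j, e_i, e_j + e_i and e_j + i e_i, with x = A_ji and y = A_ij. *)
Lemma polarization_conj (a b x y : C) : 0 <= a -> 0 <= b -> 0 <= a + x + (y + b) ->
  0 <= a + 'i * x + ('i^* * y + 'i^* * ('i * b)) -> y = x^*.
Proof.
case: a => a1 a2; case: b => b1 b2; case: x => x1 x2; case: y => y1 y2 /=.
simpc => /andP[/eqP h1 h1'] /andP[/eqP h2 h2'] /andP[/eqP h3 h3'] /andP[/eqP h4 h4'].
by apply/eqP; rewrite eq_complex /=; apply/andP; split; apply/eqP; lra.
Qed.

Lemma psd_hermitian A : psd A -> A \is hermsymmx.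
Proof.
move=> psdA; have {}psdA v : 0 <= sesq A v v by rewrite /sesq -adjmxE.
apply/is_hermitianmxP; rewrite expr0 scale1r; apply/matrixP => i j; rewrite !mxE.
pose ei : 'cV[C]_n := delta_mx i 0; pose ej : 'cV[C]_n := delta_mx j 0.
have := psdA ej; have := psdA ei; have := psdA (ej + ei); have := psdA (ej + 'i *: ei).
rewrite !sesqDl !sesqDr !sesqZl !sesqZr !sesq_delta => h4 h3 h2 h1.
exact: polarization_conj h1 h2 h3 h4.
Qed.

Lemma psd_gramian A : psd A -> gramian A.
Proof.
move=> psdA; have /hermitian_normalmx/orthomx_spectralP := psd_hermitian psdA.
have P_unitary := spectral_unitarymx A; rewrite invmx_unitary //.
set P := spectralmx A; set D := spectral_diag A => A_eq.
have PPt : P *m P ^t* = 1%:M by apply/unitarymxP.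
have D_ge0 j : 0 <= D 0 j.
  have := psdA (P ^t* *m delta_mx j 0); rewrite adjmxE trmxC_mul trmxCK A_eq.
  rewrite !mulmxA -(mulmxA _ P) PPt mulmx1 -(mulmxA _ P) PPt mulmx1.
  by rewrite trmx_delta map_delta_mx -rowE -colE !mxE eqxx mulr1n.
pose S := diag_mx (\row_j sqrtC (D 0 j)).
have SSt : S *m S ^t* = diag_mx D.
  rewrite tr_diag_mx map_diag_mx mulmx_diag; congr diag_mx; apply/rowP => j.
  rewrite !mxE -[RHS]sqrtCK expr2; congr (_ * _).
  by apply: geC0_conj; rewrite sqrtC_ge0.
exists (P ^t* *m S).
by rewrite trmxC_mul trmxCK mulmxA -(mulmxA _ S) SSt.
Qed.

End PsdGramian.

Section TestDivergenceGap.
Variable R : realType.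
Local Notation C := R[i].
Local Open Scope classical_set_scope.

Lemma trR_split m (P T : 'M[C]_m) : trR (P *m T) + trR (P *m (1%:M - T)) = trR P.
Proof. by rewrite /trR -raddfD -mxtraceD -mulmxDr addrC subrK mulmx1. Qed.

Lemma psd0 m : psd (0 : 'M[C]_m).
Proof. by move=> v; rewrite mulmx0 mul0mx mxE. Qed.

Lemma psd1 m : psd (1%:M : 'M[C]_m).
Proof.
move=> v; rewrite mulmx1 mxE; apply: sumr_ge0 => k _; rewrite mxE mulrC.
exact: mul_conjC_ge0.
Qed.

Definition gap_const (alpha : R) := ln 8 / (1 - alpha) + (ln 2 / (1 - alpha) + ln 2).

Lemma Dtest_errmin_gap alpha m (P S : 'M[C]_m) : 0 < alpha < 1 ->
  gramian P -> gramian S -> trR P = 1 -> trR S = 1 ->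
  (Dtest alpha P S <= - elog (errmin alpha P S) + (gap_const alpha)%:E)%E /\
  (- elog (errmin alpha P S) <= Dtest alpha P S + (gap_const alpha)%:E)%E.
Proof.
move=> alpha01 gP gS trP trS.
pose p T := trR (P *m (1%:M - T)); pose q (T : 'M[C]_m) := trR (S *m T).
have DtestE : Dtest alpha P S = renyi_sup alpha [set T | is_test T] p q.
  congr (ereal_sup (image _ _)); apply/funext => T.
  rewrite /renyi_T /renyi_test; congr renyi2.
  - by have := trR_split P T; rewrite trP /p; lra.
  - by have := trR_split S T; rewrite trS /q; lra.
have errminE : errmin alpha P S = err_inf alpha [set T | is_test T] p q by [].
have err01 T : is_test T -> 0 <= p T <= 1 /\ 0 <= q T <= 1.
  move=> [psdT psdT']; have := trR_split P T; have := trR_split S T.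
  have := gramian_trR_mul_ge0 gP psdT; have := gramian_trR_mul_ge0 gP psdT'.
  have := gramian_trR_mul_ge0 gS psdT; have := gramian_trR_mul_ge0 gS psdT'.
  by rewrite trP trS /p /q => *; split; apply/andP; split; lra.
have flipP T : is_test T ->
    [/\ is_test (1%:M - T), p (1%:M - T) = 1 - p T & q (1%:M - T) = 1 - q T].
  move=> [psdT psdT']; split; first by split; rewrite ?subKr.
  - by rewrite /p subKr; have := trR_split P T; rewrite trP; lra.
  - by rewrite /q; have := trR_split S T; rewrite trS; lra.
have test0 : is_test (0 : 'M[C]_m) by split; rewrite ?subr0; [exact: psd0 | exact: psd1].
have [a0 a1] := andP alpha01.
have l8 : 0 <= ln 8 / (1 - alpha) :> R by rewrite divr_ge0 ?ln_ge0 //; lra.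
have l2 : 0 <= ln 2 :> R by rewrite ln_ge0 //; lra.
have l2' : 0 <= ln 2 / (1 - alpha) :> R by rewrite divr_ge0 //; lra.
rewrite DtestE errminE /gap_const; split.
- apply: le_trans (renyi_sup_le_elog alpha01 err01 test0 flipP) _.
  by apply: leeD; rewrite // lee_fin; lra.
- apply: le_trans (renyi_sup_ge_elog alpha01 err01 test0) _.
  by apply: leeD; rewrite // lee_fin; lra.
Qed.

End TestDivergenceGap.

Lemma lhs_rhs_seq_gap (R : realType) d (rho sigma : 'M[R[i]]_d) alpha n :
  density rho -> density sigma -> 0 < alpha < 1 ->
  (lhs_seq alpha rho sigma n <=
     rhs_seq alpha rho sigma n + (gap_const alpha / n%:R)%:E)%E /\
  (rhs_seq alpha rho sigma n <=
     lhs_seq alpha rho sigma n + (gap_const alpha / n%:R)%:E)%E.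
Proof.
move=> [psd_rho tr_rho] [psd_sigma tr_sigma] alpha01.
have tpow_gramian (A : 'M[R[i]]_d) : psd A -> gramian (tpow A n).
  by move=> psdA; apply/gramian_ntens/psd_gramian.
have tpow_trR (A : 'M[R[i]]_d) : \tr A = 1 -> trR (tpow A n) = 1.
  by rewrite /trR /tpow mxtrace_ntens => ->; rewrite expr1n.
have [le_lr le_rl] := Dtest_errmin_gap alpha01 (tpow_gramian _ psd_rho)
  (tpow_gramian _ psd_sigma) (tpow_trR _ tr_rho) (tpow_trR _ tr_sigma).
have n_ge0 : 0 <= n%:R^-1 :> R by rewrite invr_ge0.
by rewrite /lhs_seq /rhs_seq -muleN; split; apply: lee_wpmul2l_addr.
Qed.

Theorem mainTheorem7 (R : realType) (d : nat) (rho sigma : 'M[R[i]]_d)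
    (alpha : R) :
  density rho -> density sigma -> 0 < alpha < 1 ->
  limn_esup (lhs_seq alpha rho sigma) = limn_esup (rhs_seq alpha rho sigma) /\
  limn_einf (lhs_seq alpha rho sigma) = limn_einf (rhs_seq alpha rho sigma).
Proof.
move=> rho_density sigma_density alpha01.
have gap n := lhs_rhs_seq_gap n rho_density sigma_density alpha01.
split; apply/le_anti/andP; split.
- exact: limn_esup_le_addn (fun n _ => (gap n).1).
- exact: limn_esup_le_addn (fun n _ => (gap n).2).
- exact: limn_einf_le_addn (fun n _ => (gap n).1).
- exact: limn_einf_le_addn (fun n _ => (gap n).2).
Qed.
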